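(* Let $R$ be a valuation domain of cardinality $\aleph_1$ and $J/R$ a type with $J$ not countably generated. If $J/R$ is essentially countable, then (i) $\Gamma'(J/R)=0$ and (ii) $\Gamma(J/R)=1$.
   Context: A valuation domain is an integral domain whose ideals are linearly ordered; $Q$ is its quotient field, $R^*$ its group of units. For $x,y\in R$, $x\equiv y \pmod r$ means $x-y\in rR$. A type $J/R$ is given by an $R$-submodule $J$ of $Q$ with $R\subseteq J$; write $J=\bigcup_{\sigma<\omega_1} r_\sigma^{-1}R$ with nonzero $r_\sigma\in R$, $r_\tau\mid r_\sigma$ and $r_\sigma\nmid r_\tau$ for $\tau<\sigma$. The type is essentially uncountable if for every $\sigma$ there is $\tau>\sigma$ with $r_\sigma R/r_\tau R$ uncountable, and essentially countable otherwise. A cub is a closed unbounded subset of $\omega_1$. $D(\omega_1)$ is the Boolean algebra of subsets of $\omega_1$ modulo the relation $S_1\sim S_2$ iff $S_1\cap C=S_2\cap C$ for some cub $C$; $\tilde S$ is the class of $S$; $0$ is the class of sets disjoint from a cub and $1$ the class of sets containing a cub. $\Gamma(J/R)=\tilde S$ where $S$ is the set of limit ordinals $\delta<\omega_1$ such that $R/\bigcap_{\sigma<\delta} r_\sigma R$ is not complete in the metrizable linear topology having the submodules $r_\sigma R/\bigcap_{\sigma'<\delta}r_{\sigma'}R$ ($\sigma<\delta$) as a basis of neighbourhoods of $0$. For a limit $\delta<\omega_1$, ${\cal T}^\delta_{J/R}$ is the set of sequences $\langle u_\sigma:\sigma<\delta\rangle$ with $u_\sigma\in R^*$ and $u_\tau-u_\sigma\in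 r_\sigma R$ for all $\sigma<\tau<\delta$. An $\omega_1$-filtration of $R$ by subrings is an increasing chain $\{N_\alpha:\alpha<\omega_1\}$ of countable subrings with $R=\bigcup_\alpha N_\alpha$ and $N_\alpha=\bigcup_{\beta<\alpha}N_\beta$ for limit $\alpha$. Fixing such a filtration, $\Gamma'(J/R)=\tilde{E'}$ where $E'$ is the set of limit $\delta<\omega_1$ for which there exists $\langle u_\sigma:\sigma<\delta\rangle\in{\cal T}^\delta_{J/R}$ such that for every $f\in R^*$ there is $\sigma<\delta$ such that there is no $n\in N_\delta$ with $u_\sigma f\equiv n\pmod{r_\sigma}$. Both $\Gamma$ and $\Gamma'$ are independent of the choices of the $r_\sigma$ and of the filtration. *)

From HB Require Import structures.
From mathcomp Require Import all_boot all_order all_algebra fraction.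
Set Implicit Arguments. Unset Strict Implicit. Unset Printing Implicit Defensive.
Import GRing.Theory.
Local Open Scope ring_scope.

Notation "x %:F" := (@FracField.tofrac _ x).

(** * The first uncountable ordinal omega_1, given axiomatically:
    an uncountable strict well-order all of whose proper initial segments
    are countable.  Any such order is order-isomorphic to omega_1. *)
Record omega1 := Omega1 {
  o1T :> Type;
  o1lt : o1T -> o1T -> Prop;
  o1_irrefl : forall x, ~ o1lt x x;
  o1_trans : forall x y z, o1lt x y -> o1lt y z -> o1lt x z;
  o1_total : forall x y, o1lt x y \/ x = y \/ o1lt y x;
  o1_wf : well_founded o1lt;
  o1_uncountable : forall f : nat -> o1T, exists x, forall n, f n <> x;
  o1_segments_countable :
    forall y, exists f : nat -> o1T, forall x, o1lt x y -> exists n, f n = x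
}.

Section Omega1Defs.
Variable W : omega1.
Local Notation "x <w y" := (o1lt x y) (at level 70).

Definition is_limit (d : W) : Prop :=
  (exists x, x <w d) /\ forall x, x <w d -> exists y, x <w y /\ y <w d.

Definition unbounded (C : W -> Prop) : Prop :=
  forall x, exists y, C y /\ x <w y.
Definition closed (C : W -> Prop) : Prop :=
  forall d, is_limit d ->
    (forall x, x <w d -> exists y, C y /\ x <w y /\ y <w d) -> C d.
Definition cub (C : W -> Prop) : Prop := closed C /\ unbounded C.

Definition D_equiv (S1 S2 : W -> Prop) : Prop :=
  exists C, cub C /\ forall x, C x -> (S1 x <-> S2 x).
Definition D_zero (S : W -> Prop) : Prop := D_equiv S (fun _ => False).
Definition D_one (S : W -> Prop) : Prop := D_equiv S (fun _ => True).

Variable R : idomainType.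

Definition in_pideal (r x : R) : Prop := exists c, x = c * r.
Definition congr_mod (r x y : R) : Prop := in_pideal r (x - y).

Definition is_ideal (I : R -> Prop) : Prop :=
  I 0 /\ (forall x y, I x -> I y -> I (x + y)) /\ (forall a x, I x -> I (a * x)).
Definition valuation_domain : Prop :=
  forall I J, is_ideal I -> is_ideal J ->
    (forall x, I x -> J x) \/ (forall x, J x -> I x).

Definition card_aleph1 : Prop := exists f : R -> W, bijective f.

Definition is_type (J : {fraction R} -> Prop) : Prop :=
  J 0 /\ (forall x y, J x -> J y -> J (x + y)) /\
  (forall (a : R) x, J x -> J (a%:F * x)) /\ (forall a : R, J a%:F).

Definition countably_generated (J : {fraction R} -> Prop) : Prop :=
  exists g : nat -> {fraction R},
    forall x, J x <-> exists (n : nat) (a : nat -> R),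
                        x = \sum_(i < n) (a i)%:F * g i.

Definition type_repr (J : {fraction R} -> Prop) (r : W -> R) : Prop :=
  (forall s, r s != 0) /\
  (forall t s, t <w s -> in_pideal (r t) (r s) /\ ~ in_pideal (r s) (r t)) /\
  (forall x, J x <-> exists s (a : R), x = a%:F / (r s)%:F).

Definition quot_uncountable (rs rt : R) : Prop :=
  ~ exists f : nat -> R, forall x, in_pideal rs x ->
      exists n, in_pideal rs (f n) /\ congr_mod rt x (f n).

Definition essentially_uncountable (r : W -> R) : Prop :=
  forall s, exists t, s <w t /\ quot_uncountable (r s) (r t).
Definition essentially_countable (r : W -> R) : Prop :=
  ~ essentially_uncountable r.

(** R / \bigcap_{s<d} r_s R is complete in the (metrizable) linear topology
    with basis r_s R / \bigcap_{s'<d} r_s' R (s < d): every Cauchy sequence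
    converges.  Since \bigcap_{s'<d} r_s' R is contained in every r_s R,
    congruence modulo r_s R in the quotient is congruence modulo r_s in R. *)
Definition complete_at (r : W -> R) (d : W) : Prop :=
  forall x : nat -> R,
    (forall s, s <w d -> exists N, forall m n, (N <= m)%N -> (N <= n)%N ->
        congr_mod (r s) (x m) (x n)) ->
    exists y, forall s, s <w d -> exists N, forall n, (N <= n)%N ->
        congr_mod (r s) (x n) y.

(** the set S with Gamma(J/R) = tilde S *)
Definition Gamma_set (r : W -> R) : W -> Prop :=
  fun d => is_limit d /\ ~ complete_at r d.

Definition is_subring (N : R -> Prop) : Prop :=
  N 1 /\ (forall x y, N x -> N y -> N (x - y)) /\
  (forall x y, N x -> N y -> N (x * y)).
Definition filtration (N : W -> R -> Prop) : Prop :=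
  (forall a, is_subring (N a)) /\
  (forall a, exists f : nat -> R, forall x, N a x -> exists n, f n = x) /\
  (forall b a, b <w a -> forall x, N b x -> N a x) /\
  (forall x, exists a, N a x) /\
  (forall a, is_limit a -> forall x, N a x -> exists b, b <w a /\ N b x).

(** the set E' with Gamma'(J/R) = tilde E' *)
Definition Gamma'_set (r : W -> R) (N : W -> R -> Prop) : W -> Prop :=
  fun d => is_limit d /\
    exists u : W -> R,
      (forall s, s <w d -> u s \is a GRing.unit) /\
      (forall s t, s <w t -> t <w d -> congr_mod (r s) (u t) (u s)) /\
      (forall f : R, f \is a GRing.unit ->
         exists s, s <w d /\ ~ exists n, N d n /\ congr_mod (r s) (u s * f) n).

End Omega1Defs.

(* Essential countability provides [s0] such that [r s0 R / r t R] is countable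
   for every [t > s0].  Both parts of the theorem then hold on cubs of limit
   ordinals above [s0]: a countable filtration stage [N_d] closed under
   representatives of these quotients absorbs every coherent unit sequence after
   normalization, and below such a [d] there are too many Cauchy sequences for
   their limits to fit into the countable quotient [r s0 R / r d R]. *)
From mathcomp Require Import all_boot all_order all_algebra fraction.
Import GRing.Theory.
From Stdlib Require Import Classical IndefiniteDescription.
Set Implicit Arguments. Unset Strict Implicit.
Local Open Scope ring_scope.

Local Notation "x <w y" := (o1lt x y) (at level 70).

Section Omega1.
Variable W : omega1.
Implicit Types a b d s t x y : W.

Lemma o1_uncountable2 (e : nat -> nat -> W) : exists x, forall i k, e i k <> x.
Proof.
have [x Hx] := o1_uncountable
  (fun m => if unpickle m is Some (i, k) then e i k else e 0%N 0%N).
by exists x => i k; have := Hx (pickle (i, k)); rewrite pickleK.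
Qed.

(* Each [h n] has countably many predecessors, so the points below or at some
   [h n] form a countable set; any point outside it bounds [h]. *)
Lemma o1_bound (h : nat -> W) : exists y, forall n, h n <w y.
Proof.
have [fs Hfs] := functional_choice _ (fun n => o1_segments_countable (h n)).
have [x Hx] := o1_uncountable2 (fun n k => if k is k'.+1 then fs n k' else h n).
exists x => n; case: (o1_total (h n) x) => [//|[Heq|Hlt]].
- by case: (Hx n 0%N).
- by have [k Hk] := Hfs n x Hlt; case: (Hx n k.+1).
Qed.

Lemma o1_bound2 (h : nat -> nat -> W) : exists y, forall i k, h i k <w y.
Proof.
have [y Hy] := o1_bound
  (fun m => if unpickle m is Some (i, k) then h i k else h 0%N 0%N).
by exists y => i k; have := Hy (pickle (i, k)); rewrite pickleK.
Qed.

Lemma o1_least (P : W -> Prop) x : P x -> exists y, P y /\ forall z, z <w y -> ~ P z.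
Proof.
elim/(well_founded_ind (@o1_wf W)): x => x IH Px.
case: (classic (exists z, z <w x /\ P z)) => [[z [Hz Pz]]|Hmin].
- exact: IH Hz Pz.
- by exists x; split => // z Hz Pz; apply: Hmin; exists z.
Qed.

Lemma o1_sup_limit (m : nat -> W) : (forall n, m n <w m n.+1) ->
  exists d, [/\ is_limit d, forall n, m n <w d & forall t, t <w d -> exists n, t <w m n].
Proof.
move=> Hm; have [y Hy] := o1_bound m.
have [d [Hmd Hmin]] := o1_least (P := fun y => forall n, m n <w y) Hy.
have Hcof t : t <w d -> exists n, t <w m n.
  move=> /Hmin Ht; apply: NNPP => Hnot; apply: Ht => n.
  case: (o1_total (m n) t) => [//|[Heq|Hgt]]; exfalso; apply: Hnot.
  - by exists n.+1; rewrite -Heq.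
  - by exists n.
exists d; split => //; split; first by exists (m 0%N).
by move=> x /Hcof [n Hn]; exists (m n).
Qed.

Lemma limit_above2 d a b : is_limit d -> a <w d -> b <w d ->
  exists y, [/\ a <w y, b <w y & y <w d].
Proof.
move=> [_ Hd] /Hd [ya [Hya Hyad]] /Hd [yb [Hyb Hybd]].
case: (o1_total ya yb) => [Hlt|[Heq|Hgt]].
- by exists yb; split => //; exact: o1_trans Hya Hlt.
- by subst yb; exists ya; split.
- by exists ya; split => //; exact: o1_trans Hyb Hgt.
Qed.

Lemma limit_cofinal_seq d s0 : is_limit d -> s0 <w d ->
  exists sg : nat -> W, [/\ sg 0%N = s0, forall n, sg n <w sg n.+1,
    forall n, sg n <w d & forall t, t <w d -> exists n, t <w sg n].
Proof.
move=> Hd Hs0; have [fd Hfd] := o1_segments_countable d.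
have Hstep a b : exists y, a <w d -> [/\ a <w y, y <w d & b <w d -> b <w y].
  case: (classic (a <w d)) => Ha; last by exists a.
  case: (classic (b <w d)) => Hb.
  - by have [y [Hay Hby Hyd]] := limit_above2 Hd Ha Hb; exists y.
  - by have [y [Hay _ Hyd]] := limit_above2 Hd Ha Ha; exists y.
have [next Hnext] := functional_choice _ (fun a => functional_choice _ (Hstep a)).
pose fix sg n := if n is n'.+1 then next (sg n') (fd n') else s0.
have Hsgd n : sg n <w d by elim: n => [//|n IH]; case: (Hnext _ (fd n) IH).
exists sg; split => // [n|t Ht]; first by case: (Hnext _ (fd n) (Hsgd n)).
have [n Hn] := Hfd t Ht; exists n.+1; rewrite -Hn in Ht *.
by case: (Hnext _ (fd n) (Hsgd n)) => _ _; apply.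
Qed.

Lemma cub_closure_points s0 (h : W -> nat -> W) :
  cub (fun d => [/\ is_limit d, s0 <w d & forall t, t <w d -> forall k, h t k <w d]).
Proof.
split.
- move=> d Hd Hcl; split => //.
  + have [x Hx] := Hd.1; have [y [[_ Hs0y _] [_ Hyd]]] := Hcl x Hx.
    exact: o1_trans Hs0y Hyd.
  + move=> t Ht k; have [y [[_ _ Hy] [Hty Hyd]]] := Hcl t Ht.
    exact: o1_trans (Hy t Hty k) Hyd.
- have [fs Hfs] := functional_choice _ (fun a : W => o1_segments_countable a).
  have Hstep a : exists b, a <w b /\ forall t, t <w a -> forall k, h t k <w b.
    have [b Hb] := o1_bound2 (fun i k => if k is k'.+1 then h (fs a i) k' else a).
    exists b; split; first exact: (Hb 0%N 0%N).
    by move=> t /(Hfs a) [i <-] k; exact: (Hb i k.+1).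
  have [step Hst] := functional_choice _ Hstep.
  move=> x; have [m0 Hm0] := o1_bound (fun n => if n is 0%N then x else s0).
  pose m n := iter n step m0.
  have [d [Hd Hmd Hcof]] := o1_sup_limit (fun n => (Hst (m n)).1).
  exists d; split; last exact: o1_trans (Hm0 0%N) (Hmd 0%N).
  split => //; first exact: o1_trans (Hm0 1%N) (Hmd 0%N).
  move=> t /Hcof [n Hn] k.
  exact: o1_trans ((Hst (m n)).2 t Hn k) (Hmd n.+1).
Qed.

End Omega1.

Section PrincipalIdeals.
Variable R : idomainType.
Implicit Types a b x y z : R.

Lemma in_pideal_refl a : in_pideal a a.
Proof. by exists 1; rewrite mul1r. Qed.

Lemma in_pideal0 a : in_pideal a 0.
Proof. by exists 0; rewrite mul0r. Qed.

Lemma in_pideal_trans a b x : in_pideal a b -> in_pideal b x -> in_pideal a x.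
Proof. by move=> [u ->] [v ->]; exists (v * u); rewrite mulrA. Qed.

Lemma in_pidealB a x y : in_pideal a x -> in_pideal a y -> in_pideal a (x - y).
Proof. by move=> [u ->] [v ->]; exists (u - v); rewrite mulrBl. Qed.

Lemma in_pidealN a x : in_pideal a x -> in_pideal a (- x).
Proof. by move=> Hx; rewrite -sub0r; apply: in_pidealB => //; exact: in_pideal0. Qed.

Lemma in_pidealMr a x y : in_pideal a x -> in_pideal a (x * y).
Proof. by move=> [u ->]; exists (u * y); rewrite mulrAC. Qed.

Lemma congr_mod_refl a x : congr_mod a x x.
Proof. by rewrite /congr_mod subrr; exact: in_pideal0. Qed.

Lemma congr_mod_sym a x y : congr_mod a x y -> congr_mod a y x.
Proof. by move=> /in_pidealN; rewrite /congr_mod opprB. Qed.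

Lemma congr_mod_trans a y x z : congr_mod a x y -> congr_mod a y z -> congr_mod a x z.
Proof.
move=> Hxy Hyz; have := in_pidealB Hxy (in_pidealN Hyz).
by rewrite /congr_mod opprK addrA subrK.
Qed.

Lemma congr_modW a b x y : in_pideal a b -> congr_mod b x y -> congr_mod a x y.
Proof. exact: in_pideal_trans. Qed.

Lemma congr_modMr a x y z : congr_mod a x y -> congr_mod a (x * z) (y * z).
Proof. by rewrite /congr_mod -mulrBl; exact: in_pidealMr. Qed.

Lemma congr_mod_addr a x y : in_pideal a y -> congr_mod a (x + y) x.
Proof. by rewrite /congr_mod addrAC subrr add0r. Qed.

Lemma in_pideal_congr a x y : congr_mod a x y -> in_pideal a x -> in_pideal a y.
Proof. by move=> Hxy Hx; rewrite -(subKr x y); exact: in_pidealB. Qed.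

Lemma congr_modDl a x y z : congr_mod a x y -> congr_mod a (z + x) (z + y).
Proof. by rewrite /congr_mod opprD addrACA subrr add0r. Qed.

Definition covers_residues a b (g : nat -> R) : Prop :=
  forall z, in_pideal a z -> exists k, congr_mod b z (g k).

Lemma quot_countable_covers a b :
  ~ quot_uncountable a b -> exists g, covers_residues a b g.
Proof. by move/NNPP => [f Hf]; exists f => z /Hf [n [_ Hn]]; exists n. Qed.

Lemma subringD (N : R -> Prop) x y : is_subring N -> N x -> N y -> N (x + y).
Proof.
move=> [N1 [NB _]] Nx Ny; have N0 : N 0 by rewrite -(subrr 1); exact: NB.
have -> : x + y = x - (0 - y) by rewrite sub0r opprK.
exact: NB Nx (NB _ _ N0 Ny).
Qed.

End PrincipalIdeals.


Section BitSums.
Variables (R : idomainType) (rho : nat -> R).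
Hypothesis rho_dvdS : forall n, in_pideal (rho n) (rho n.+1).
Hypothesis rho_ndvdS : forall n, ~ in_pideal (rho n.+1) (rho n).

Definition bit_sum (e : nat -> bool) (m : nat) : R :=
  \sum_(n < m) (if e n then rho n else 0).

Definition rho_limit (x : nat -> R) (y : R) : Prop :=
  forall j, exists N, forall n, (N <= n)%N -> congr_mod (rho j) (x n) y.

Lemma rho_dvd i j : (i <= j)%N -> in_pideal (rho i) (rho j).
Proof.
move=> /subnK <-; elim: (j - i)%N => [|k IH]; first exact: in_pideal_refl.
exact: in_pideal_trans IH (rho_dvdS _).
Qed.

Lemma bit_sumS e m : bit_sum e m.+1 = bit_sum e m + (if e m then rho m else 0).
Proof. by rewrite /bit_sum big_ord_recr. Qed.

Lemma bit_sum_cauchy e N m : (N <= m)%N ->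
  congr_mod (rho N) (bit_sum e m) (bit_sum e N).
Proof.
move=> /subnK <-; elim: (m - N)%N => [|k IH]; first exact: congr_mod_refl.
rewrite addSn bit_sumS; apply: congr_mod_trans IH; apply: congr_mod_addr.
by case: (e _); [apply: rho_dvd; exact: leq_addl | exact: in_pideal0].
Qed.

Lemma bit_sum_in e m : in_pideal (rho 0) (bit_sum e m).
Proof.
by have := bit_sum_cauchy e (leq0n m); rewrite /congr_mod /bit_sum big_ord0 subr0.
Qed.

(* Two bit sums first differing at [k] differ by [+-rho k] modulo [rho k.+1],
   and [rho k.+1] does not divide [rho k]. *)
Lemma bit_sum_limits_separated e e' k y y' :
  rho_limit (bit_sum e) y -> rho_limit (bit_sum e') y' ->
  (forall i, (i < k)%N -> e i = e' i) -> e k != e' k ->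
  ~ congr_mod (rho k.+1) y y'.
Proof.
move=> Hy Hy' Hagree Hk Hyy'.
have Hclose (f : nat -> bool) z : rho_limit (bit_sum f) z ->
    congr_mod (rho k.+1) z (bit_sum f k.+1).
  move=> /(_ k.+1) [M HM]; pose n := maxn M k.+1.
  apply: congr_mod_trans (bit_sum_cauchy f (leq_maxr M k.+1)).
  exact: congr_mod_sym (HM n (leq_maxl M k.+1)).
have := congr_mod_trans (congr_mod_trans (congr_mod_sym (Hclose _ _ Hy)) Hyy')
  (Hclose _ _ Hy'); rewrite !bit_sumS.
have -> : bit_sum e k = bit_sum e' k by apply: eq_bigr => i _; rewrite Hagree.
rewrite /congr_mod opprD addrACA subrr add0r.
move=> Hdiff; apply: (@rho_ndvdS k); move: Hk Hdiff.
case: (e k); case: (e' k) => // _.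
- by rewrite subr0.
- by rewrite sub0r => /in_pidealN; rewrite opprK.
Qed.

End BitSums.

(* Cantor's diagonal argument. *)
Lemma bits_collision (F : (nat -> bool) -> nat) : exists e e' k,
  [/\ F e = F e', forall i, (i < k)%N -> e i = e' i & e k != e' k].
Proof.
have Hinv n : exists e : nat -> bool, (exists e0, F e0 = n) -> F e = n.
  case: (classic (exists e0, F e0 = n)) => [[e0 He0]|Hn]; first by exists e0.
  by exists (fun _ => false) => /Hn.
have [G HG] := functional_choice _ Hinv.
pose diag n := ~~ G n n.
have Hne : exists k, diag k != G (F diag) k by exists (F diag); rewrite /diag; case: (G _ _).
case: (ex_minnP Hne) => k Hk Hmin; exists diag, (G (F diag)), k.
split; [by rewrite HG; last exists diag | | exact: Hk].
by move=> i Hi; apply/eqP; apply: contraTT Hi => /Hmin; rewrite -leqNgt.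
Qed.

Section Gammas.
Variables (W : omega1) (R : idomainType) (r : W -> R).
Hypothesis r_chain : forall t s, t <w s -> in_pideal (r t) (r s) /\ ~ in_pideal (r s) (r t).

Lemma essentially_countable_covers : essentially_countable r ->
  exists s0 (G : W -> nat -> R), forall t, s0 <w t -> covers_residues (r s0) (r t) (G t).
Proof.
move=> Hec.
have [s0 Hs0] : exists s0, forall t, s0 <w t -> ~ quot_uncountable (r s0) (r t).
  apply: NNPP => Hno; apply: Hec => s; apply: NNPP => Hs; apply: Hno; exists s.
  by move=> t Hst Hq; apply: Hs; exists t.
have HG t : exists g, s0 <w t -> covers_residues (r s0) (r t) g.
  case: (classic (s0 <w t)) => Ht; last by exists (fun _ => 0).
  by have [g Hg] := quot_countable_covers (Hs0 t Ht); exists g.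
by have [G HG'] := functional_choice _ HG; exists s0, G.
Qed.

(* Multiplying by [f = (u sg)^-1] for some [s0 < sg < d] makes [u s f] congruent
   to [1] below [sg]; above [sg], [u s f - 1] lies in [r s0 R], whose residues
   modulo [r s] are represented in [N]. *)
Lemma coherent_units_normalize (N : R -> Prop) s0 d (G : W -> nat -> R) (u : W -> R) :
  is_subring N -> is_limit d -> s0 <w d ->
  (forall t, s0 <w t -> covers_residues (r s0) (r t) (G t)) ->
  (forall t, t <w d -> forall k, N (G t k)) ->
  (forall s, s <w d -> u s \is a GRing.unit) ->
  (forall s t, s <w t -> t <w d -> congr_mod (r s) (u t) (u s)) ->
  exists2 f, f \is a GRing.unit &
    forall s, s <w d -> exists n, N n /\ congr_mod (r s) (u s * f) n.
Proof.
move=> HN [_ Hd] Hs0 HG HNG Hu Huc; have [sg [Hs0sg Hsgd]] := Hd s0 Hs0.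
have Hsg1 : u sg * (u sg)^-1 = 1 by rewrite mulrV // Hu.
exists (u sg)^-1; first by rewrite unitrV Hu.
move=> s Hs; case: (o1_total s sg) => [Hlt|[->|Hgt]].
- exists 1; split; first exact: HN.1.
  by rewrite -Hsg1; apply: congr_modMr; exact: congr_mod_sym (Huc _ _ Hlt Hsgd).
- by exists 1; split; [exact: HN.1 | rewrite Hsg1; exact: congr_mod_refl].
- pose z := (u s - u sg) * (u sg)^-1.
  have Hz : in_pideal (r s0) z.
    apply: in_pidealMr; apply: in_pideal_trans (r_chain Hs0sg).1 _.
    exact: Huc _ _ Hgt Hs.
  have [k Hk] := HG s (o1_trans Hs0sg Hgt) z Hz.
  exists (1 + G s k); split; first exact: subringD HN HN.1 (HNG s Hs k).
  have -> : u s * (u sg)^-1 = 1 + z by rewrite /z mulrBl Hsg1 addrC subrK.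
  exact: congr_modDl.
Qed.

(* Above [s0] the bit sums along a sequence cofinal in [d] have [2^aleph_0]
   limits which are pairwise incongruent modulo [r d], yet all lie in the
   countable quotient [r s0 R / r d R]. *)
Lemma limit_incomplete s0 d (g : nat -> R) :
  covers_residues (r s0) (r d) g -> is_limit d -> s0 <w d -> ~ complete_at r d.
Proof.
move=> Hg Hd Hs0 Hcomp.
have [sg [Hsg0 Hinc Hsgd Hcof]] := limit_cofinal_seq Hd Hs0.
pose rho n := r (sg n).
have rho_dvdS n : in_pideal (rho n) (rho n.+1) by exact: (r_chain (Hinc n)).1.
have rho_ndvdS n : ~ in_pideal (rho n.+1) (rho n) by exact: (r_chain (Hinc n)).2.
have Hlim e : exists y, forall s, s <w d ->
    exists N, forall n, (N <= n)%N -> congr_mod (r s) (bit_sum rho e n) y.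
  apply: Hcomp => s /Hcof [j Hj]; exists j => m n Hm Hn.
  apply: congr_modW (r_chain Hj).1 _.
  exact: congr_mod_trans (bit_sum_cauchy rho_dvdS e Hm)
                         (congr_mod_sym (bit_sum_cauchy rho_dvdS e Hn)).
have [y Hy] := functional_choice _ Hlim.
have Hyrho e : rho_limit rho (bit_sum rho e) (y e) := fun j => Hy e _ (Hsgd j).
have Hys0 e : in_pideal (r s0) (y e).
  have [N HN] := Hyrho e 0%N; rewrite -Hsg0.
  exact: in_pideal_congr (HN N (leqnn N)) (bit_sum_in rho_dvdS e N).
have [F HF] := functional_choice _ (fun e => Hg _ (Hys0 e)).
have [e [e' [k [HFe Hagree Hk]]]] := bits_collision F.
apply: (bit_sum_limits_separated rho_dvdS rho_ndvdS (Hyrho e) (Hyrho e') Hagree Hk).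
apply: congr_modW (r_chain (Hsgd k.+1)).1 _.
by apply: congr_mod_trans (HF e) _; rewrite HFe; exact: congr_mod_sym (HF e').
Qed.

End Gammas.

Theorem mainTheorem5 (W : omega1) (R : idomainType)
  (J : {fraction R} -> Prop) (r : W -> R) :
  valuation_domain R ->
  card_aleph1 W R ->
  is_type J ->
  ~ countably_generated J ->
  type_repr J r ->
  essentially_countable r ->
  (forall N : W -> R -> Prop, filtration N -> D_zero (Gamma'_set r N)) /\
  D_one (Gamma_set r).
Proof.
move=> _ _ _ _ [_ [r_chain _]] /essentially_countable_covers.
move=> [s0 [G HG]]; split.
- move=> N [Nsub [_ [Nmono [Ncov _]]]]; have [idx Hidx] := functional_choice _ Ncov.
  exists (fun d => [/\ is_limit d, s0 <w d &
                        forall t, t <w d -> forall k, idx (G t k) <w d]).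
  split; first exact: cub_closure_points.
  move=> d [Hd Hs0d Hclosed]; split=> // [[_ [u [Hu [Huc Hnot]]]]].
  have HNG t : t <w d -> forall k, N d (G t k).
    by move=> Ht k; exact: Nmono _ _ (Hclosed t Ht k) _ (Hidx _).
  have [f Hfu Hf] := coherent_units_normalize r_chain (Nsub d) Hd Hs0d HG HNG Hu Huc.
  by have [s [Hs []]] := Hnot f Hfu; exact: Hf.
- exists (fun d => [/\ is_limit d, s0 <w d & forall t, t <w d -> forall k : nat, s0 <w d]).
  split; first exact: (cub_closure_points s0 (fun _ _ => s0)).
  move=> d [Hd Hs0d _]; split=> // _; split=> //.
  exact: (limit_incomplete r_chain (HG d Hs0d) Hd Hs0d).
Qed.
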